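(* Let $\alpha\in(0,1)$, $R>0$, and consider the initial state $(x_O,y_O,y_T)$ at time $0$. Let $C=\{(x,y):(x-x_O)^2+(y-y_O)^2=R^2\}$ be the boundary of the observation disk and $\mathrm{DL}=\{(\pm s\alpha,\,y_T+s\sqrt{1-\alpha^2}):s\ge0\}$ the Decision Line. If $C\cap\mathrm{DL}$ consists of exactly two points, then the state belongs to $\mathscr B_2\cup\mathscr B_3$; consequently the optimal observation time is non-zero.
   Context: Target: position $(0,y_T(t))$, $\dot y_T=1$, $y_T(0)=y_T$. Observer: position $(x_O(t),y_O(t))$ starting at $(x_O,y_O)$, $\dot x_O=\alpha\cos\psi(t)$, $\dot y_O=\alpha\sin\psi(t)$, heading $\psi:[0,\infty)\to\mathbb R$ a measurable control. Observation disk: closed disk of radius $R$ centered at the observer. For a control, $t_2=\inf\{t\ge0:x_O(t)^2+(y_O(t)-y_T(t))^2\le R^2\}$, $t_f=\inf\{t\ge t_2:x_O(t)^2+(y_O(t)-y_T(t))^2>R^2\}$, and $t_{\text{obs}}=t_f-t_2$ (taken to be $0$ if no contact occurs). The optimal observation time $t^*_{\text{obs}}$ is the supremum of $t_{\text{obs}}$ over all controls. The Decision Line is the set of points $Z$ whose Apollonius circle $\{P:|PZ|=\alpha|PT|\}$ with the initial target position $T=(0,y_T)$ is tangent to the target's path $\{(0,y):y\ge y_T\}$, which is the union of the two rays given. $\mathscr B_1=\{t^*_{\text{obs}}=0\}$, $\mathscr B_3=\{t^*_{\text{obs}}=2R/(1-\alpha)\}$, $\mathscr B_2=\{0<t^*_{\text{obs}}<2R/(1-\alpha)\}$.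 *)

From HB Require Import structures.
From mathcomp Require Import all_boot all_order all_algebra.
From mathcomp Require Import all_classical all_reals all_analysis.
Set Implicit Arguments. Unset Strict Implicit. Unset Printing Implicit Defensive.
Import Order.TTheory GRing.Theory Num.Theory.
Import numFieldNormedType.Exports.
Local Open Scope classical_set_scope.
Local Open Scope ring_scope.

Section Game.
Variable R : realType.

Definition xO_traj (alpha xO : R) (psi : R -> R) (t : R) : R :=
  xO + Rintegral (@lebesgue_measure R) `[0, t] (fun s => alpha * cos (psi s)).
Definition yO_traj (alpha yO : R) (psi : R -> R) (t : R) : R :=
  yO + Rintegral (@lebesgue_measure R) `[0, t] (fun s => alpha * sin (psi s)).
(* Target: (0, yT + t). Squared observer-target distance at time t. *)
Definition dist2 (alpha xO yO yT : R) (psi : R -> R) (t : R) : R :=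
  (xO_traj alpha xO psi t) ^+ 2 + (yO_traj alpha yO psi t - (yT + t)) ^+ 2.

Local Open Scope ereal_scope.
(* t_2 : first time of contact (+oo if none) *)
Definition t2_time (alpha Rd xO yO yT : R) (psi : R -> R) : \bar R :=
  ereal_inf (EFin @` [set t : R | (0 <= t)%R /\ (dist2 alpha xO yO yT psi t <= Rd ^+ 2)%R]).
Definition tf_time (alpha Rd xO yO yT : R) (psi : R -> R) : \bar R :=
  ereal_inf (EFin @` [set t : R | t2_time alpha Rd xO yO yT psi <= t%:E /\
                                  (Rd ^+ 2 < dist2 alpha xO yO yT psi t)%R]).
Definition t_obs (alpha Rd xO yO yT : R) (psi : R -> R) : \bar R :=
  if t2_time alpha Rd xO yO yT psi == +oo then 0
  else tf_time alpha Rd xO yO yT psi - t2_time alpha Rd xO yO yT psi.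
Definition t_obs_opt (alpha Rd xO yO yT : R) : \bar R :=
  ereal_sup [set t_obs alpha Rd xO yO yT psi | psi in
             [set psi : R -> R | measurable_fun (`[0%R, +oo[ : set R) psi]].
Local Close Scope ereal_scope.

Definition obs_circle (Rd xO yO : R) : set (R * R) :=
  [set p | (p.1 - xO) ^+ 2 + (p.2 - yO) ^+ 2 = Rd ^+ 2].
Definition decision_line (alpha yT : R) : set (R * R) :=
  [set p | exists s : R, 0 <= s /\
     (p = (s * alpha, yT + s * Num.sqrt (1 - alpha ^+ 2)) \/
      p = (- (s * alpha), yT + s * Num.sqrt (1 - alpha ^+ 2)))].

Definition B2 (alpha Rd xO yO yT : R) : Prop :=
  (0 < t_obs_opt alpha Rd xO yO yT < (2 * Rd / (1 - alpha))%:E)%E.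
Definition B3 (alpha Rd xO yO yT : R) : Prop :=
  t_obs_opt alpha Rd xO yO yT = (2 * Rd / (1 - alpha))%:E.
End Game.

(* The observation time never exceeds 2R/(1-alpha): the vertical offset from the
   target to the observer decreases at rate at least 1 - alpha, so it leaves
   [-R, R], and the disk, at most 2R/(1-alpha) after the first contact.
   For the lower bound, the midpoint m of the two intersection points lies
   strictly inside the circle, and, the region above the Decision Line being
   convex, in the cone sqrt(1-alpha^2) |x| <= alpha (y - yT).  For m in that cone
   some constant heading puts the target, at some time t, in the same position
   relative to the observer as m relative to the observer's start, i.e. inside
   the disk.  Under a constant heading the squared distance is a convex
   quadratic in time, so contact starts at a time t2 <= t and lasts beyond t. *)

From HB Require Import structures.
From mathcomp Require Import all_boot all_order all_algebra.
From mathcomp Require Import all_classical all_reals all_analysis.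
From mathcomp Require Import ring lra.
Set Implicit Arguments. Unset Strict Implicit. Unset Printing Implicit Defensive.
Import Order.TTheory GRing.Theory Num.Theory.
Import numFieldNormedType.Exports.
Local Open Scope classical_set_scope.
Local Open Scope ring_scope.

Section ObservationGame.
Variable R : realType.
Notation mu := (@lebesgue_measure R).

Lemma integrable_bounded_itv0 (f : R -> R) (b c : R) :
  measurable_fun `[0, b] f -> (forall x, 0 <= x <= b -> `|f x| <= c) ->
  mu.-integrable `[0, b] (EFin \o f).
Proof.
move=> mf fc; apply: measurable_bounded_integrable => //.
  have := lebesgue_measure_itv `[0, b]; rewrite /= => ->.
  by case: ifP => _; rewrite ?ltry.
exists c; split; first exact: num_real.
move=> M cM y /[dup] + /=; rewrite in_itv /= => /fc fyc _; lra.
Qed.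

Lemma Rintegral_itv0_increment_le (f : R -> R) (a b c : R) :
  measurable_fun `[0, b] f -> (forall x, 0 <= x <= b -> `|f x| <= c) ->
  0 <= a <= b ->
  Rintegral mu `[0, b] f - Rintegral mu `[0, a] f <= c * (b - a).
Proof.
move=> mf fc /andP[a0 ab].
have c0 : 0 <= c by apply: le_trans (normr_ge0 (f 0)) (fc 0 _); rewrite lexx; lra.
have fint := integrable_bounded_itv0 mf fc.
have sub_ab : `]a, b] `<=` `[0, b] by apply: subset_itvr; rewrite bnd_simp.
rewrite Rintegral_itvB ?bnd_simp //.
have <- : Rintegral mu `]a, b] (fun=> c) = c * (b - a).
  rewrite Rintegral_cst //.
  have := lebesgue_measure_itv `]a, b]; rewrite /= => ->; rewrite lte_fin.
  by case: ltgtP => [_|ba|->] /=; [rewrite mulrC | lra | rewrite subrr mulr0].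
apply: le_Rintegral => //; first exact: integrableS fint.
- apply: integrableS (_ : mu.-integrable `[0, b] (EFin \o fun=> c)) => //.
  by apply: (integrable_bounded_itv0 (c := c)) => // x _; rewrite ger0_norm.
- move=> x; rewrite /= in_itv /= => /andP[ax xb].
  by apply: le_trans (ler_norm _) (fc _ _); apply/andP; split; lra.
Qed.

Lemma yO_traj_increment_le (alpha yO : R) (psi : R -> R) (a b : R) :
  0 <= alpha -> measurable_fun (`[0%R, +oo[ : set R) psi -> 0 <= a <= b ->
  yO_traj alpha yO psi b - yO_traj alpha yO psi a <= alpha * (b - a).
Proof.
move=> alpha0 mpsi ab; rewrite /yO_traj opprD addrACA subrr add0r.
apply: Rintegral_itv0_increment_le => //.
  apply: measurable_realfun.measurable_funM => //.
  apply: measurableT_comp.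
    exact: measurable_realfun.continuous_measurable_fun (@continuous_sin R).
  by apply: measurable_funS mpsi => // x; rewrite /= !in_itv /= => /andP[->].
by move=> x _; rewrite normrM ger0_norm // ler_piMr // sin_max.
Qed.

Definition contact_times (alpha Rd xO yO yT : R) (psi : R -> R) : set R :=
  [set t | 0 <= t /\ dist2 alpha xO yO yT psi t <= Rd ^+ 2].

Lemma t2_timeE (alpha Rd xO yO yT : R) (psi : R -> R) :
  t2_time alpha Rd xO yO yT psi =
  ereal_inf (EFin @` contact_times alpha Rd xO yO yT psi).
Proof. by []. Qed.

Lemma dist2_gt_after_contact (alpha Rd xO yO yT : R) (psi : R -> R) (s t : R) :
  0 <= alpha < 1 -> 0 <= Rd -> measurable_fun (`[0%R, +oo[ : set R) psi ->
  contact_times alpha Rd xO yO yT psi s -> s + 2 * Rd / (1 - alpha) < t ->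
  Rd ^+ 2 < dist2 alpha xO yO yT psi t.
Proof.
move=> /andP[a0 a1] Rd0 mpsi [s0 hs] st.
set dy := fun u => yO_traj alpha yO psi u - (yT + u).
have dys_le : dy s <= Rd.
  have : dy s ^+ 2 <= Rd ^+ 2 by apply: le_trans hs; rewrite /dist2 lerDr sqr_ge0.
  nra.
have B0 : 0 <= 2 * Rd / (1 - alpha) by apply: divr_ge0; lra.
have drop : 2 * Rd < (t - s) * (1 - alpha).
  by rewrite -ltr_pdivrMr ?subr_gt0 //; lra.
have inc : yO_traj alpha yO psi t - yO_traj alpha yO psi s <= alpha * (t - s).
  by apply: yO_traj_increment_le => //; apply/andP; split; lra.
have dyt_lt : dy t < - Rd by rewrite /dy /= in dys_le *; nra.
apply: (lt_le_trans (_ : Rd ^+ 2 < dy t ^+ 2)); first nra.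
by rewrite /dist2 lerDr sqr_ge0.
Qed.

Lemma t_obs_le (alpha Rd xO yO yT : R) (psi : R -> R) :
  0 <= alpha < 1 -> 0 <= Rd -> measurable_fun (`[0%R, +oo[ : set R) psi ->
  (t_obs alpha Rd xO yO yT psi <= (2 * Rd / (1 - alpha))%:E)%E.
Proof.
move=> a01 Rd0 mpsi; have /andP[a0 a1] := a01.
set B := 2 * Rd / (1 - alpha).
have B0 : 0 <= B by apply: divr_ge0; lra.
rewrite /t_obs; case: ifP => [_|]; first by rewrite lee_fin.
rewrite t2_timeE; set S := contact_times _ _ _ _ _ _.
have [->|/set0P Sne] := eqVneq S set0; first by rewrite image_set0 ereal_inf0 eqxx.
have Slb : has_lbound S by exists 0 => x [].
move=> _; rewrite ereal_inf_EFin // leeBlDl // -EFinD.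
apply/lee_addgt0Pr => e e0.
have [s Ss s_lt] := inf_adherent e0 (conj Sne Slb).
apply: ereal_inf_lbound; exists (inf S + B + e) => //; split.
  by rewrite t2_timeE -/S ereal_inf_EFin // lee_fin -addrA lerDl addr_ge0 // ltW.
by apply: dist2_gt_after_contact Ss _ => //; rewrite -/B; lra.
Qed.

Definition affine_sqnorm (x0 vx y0 vy t : R) : R :=
  (x0 + vx * t) ^+ 2 + (y0 + vy * t) ^+ 2.

Lemma continuous_affine_sqnorm (x0 vx y0 vy : R) :
  continuous (affine_sqnorm x0 vx y0 vy).
Proof.
have -> : affine_sqnorm x0 vx y0 vy =
    horner ((x0%:P + vx *: 'X) ^+ 2 + (y0%:P + vy *: 'X) ^+ 2).
  by apply/funext => t; rewrite !hornerE.
exact: continuous_horner.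
Qed.

Lemma affine_sqnorm_le_between (x0 vx y0 vy c s t x : R) : s <= x <= t ->
  affine_sqnorm x0 vx y0 vy s <= c -> affine_sqnorm x0 vx y0 vy t <= c ->
  affine_sqnorm x0 vx y0 vy x <= c.
Proof.
move=> /andP[sx xt]; set f := affine_sqnorm x0 vx y0 vy => fs ft.
have [st|ts] := ltP s t; last by have -> : x = t by lra.
have interp : (t - s) * f x = (t - x) * f s + (x - s) * f t
    - (vx ^+ 2 + vy ^+ 2) * ((t - x) * (x - s) * (t - s)).
  by rewrite /f /affine_sqnorm; ring.
have : 0 <= (vx ^+ 2 + vy ^+ 2) * ((t - x) * (x - s) * (t - s)).
  by apply: mulr_ge0; [rewrite addr_ge0 ?sqr_ge0 | rewrite !mulr_ge0 //; lra].
have : (t - x) * f s <= (t - x) * c by rewrite ler_wpM2l //; lra.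
have : (x - s) * f t <= (x - s) * c by rewrite ler_wpM2l //; lra.
move=> hs ht hp; rewrite -(ler_pM2l (_ : 0 < t - s)); lra.
Qed.

Lemma closed_inf_mem (A : set R) :
  A !=set0 -> has_lbound A -> closed A -> A (inf A).
Proof.
move=> A0 Alb Acl; apply: itv_closed_infimums => //; split.
  by move=> x Ax; apply: ge_inf.
by move=> x xlb; apply: lb_le_inf.
Qed.

Lemma t_obs_gt0 (alpha Rd xO yO yT : R) (psi g : R -> R) (t : R) :
  continuous g -> (forall u, 0 <= u -> dist2 alpha xO yO yT psi u = g u) ->
  (forall s u x, s <= x <= u -> g s <= Rd ^+ 2 -> g u <= Rd ^+ 2 -> g x <= Rd ^+ 2) ->
  0 <= t -> g t < Rd ^+ 2 -> (0 < t_obs alpha Rd xO yO yT psi)%E.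
Proof.
move=> gC dE g_between t0 gt.
set S := contact_times alpha Rd xO yO yT psi.
have St : S t by split; rewrite // dE // ltW.
have Slb : has_lbound S by exists 0 => x [].
have S_closed : closed S.
  have -> : S = [set u | 0 <= u] `&` g @^-1` [set y | y <= Rd ^+ 2].
    by apply/seteqP; split=> u [u0 hu]; split; rewrite //= ?dE // -dE.
  by apply: closedI; [exact: closed_ge | apply: preimage_closed => // ? _; exact: gC].
have [inf0 ginf] : 0 <= inf S /\ g (inf S) <= Rd ^+ 2.
  by have [inf0 hinf] := closed_inf_mem (ex_intro _ t St) Slb S_closed; rewrite -dE.
have t2E : t2_time alpha Rd xO yO yT psi = (inf S)%:E.
  by rewrite t2_timeE ereal_inf_EFin //; exists t.
have [d d0 near_t] : exists2 d, 0 < d & forall u, `|t - u| < d -> g u < Rd ^+ 2.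
  have [d d0 hd] := iffLR (nbhs_ballP _ _) (cvgr_lt _ (gC t) _ gt).
  by exists d => // u; apply: hd.
have tf_ge : ((t + d)%:E <= tf_time alpha Rd xO yO yT psi)%E.
  apply/ereal_infP => _ [u [t2u hu] <-]; rewrite lee_fin leNgt; apply/negP => ud.
  rewrite t2E lee_fin in t2u; rewrite dE in hu; last by lra.
  have [ut|tu] := leP u t.
    have u_mid : inf S <= u <= t by rewrite t2u ut.
    by have := g_between _ _ _ u_mid ginf (ltW gt); lra.
  by have := near_t u; rewrite ltr0_norm ?subr_lt0 //; lra.
have inf_le_t : inf S <= t by apply: ge_inf.
by rewrite /t_obs t2E /= EFinN sube_gt0 (lt_le_trans _ tf_ge) // lte_fin; lra.
Qed.

Lemma Rintegral_cst_itv0 (c u : R) : 0 <= u -> Rintegral mu `[0, u] (fun=> c) = c * u.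
Proof.
move=> u0; rewrite Rintegral_cst //.
have := lebesgue_measure_itv `[0, u]; rewrite /= => ->; rewrite lte_fin.
by case: ltP => [_|u_le0]; rewrite /= ?oppr0 ?addr0 // (_ : u = 0) ?mulr0 //; lra.
Qed.

Lemma dist2_const_heading (alpha xO yO yT theta u : R) : 0 <= u ->
  dist2 alpha xO yO yT (fun=> theta) u =
  affine_sqnorm xO (alpha * cos theta) (yO - yT) (alpha * sin theta - 1) u.
Proof.
move=> u0; rewrite /dist2 /xO_traj /yO_traj !Rintegral_cst_itv0 //.
by rewrite /affine_sqnorm; congr (_ + _ ^+ 2); ring.
Qed.

Lemma t_obs_const_heading_gt0 (alpha Rd xO yO yT theta t : R) :
  0 <= t -> dist2 alpha xO yO yT (fun=> theta) t < Rd ^+ 2 ->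
  (0 < t_obs alpha Rd xO yO yT (fun=> theta))%E.
Proof.
move=> t0; rewrite dist2_const_heading //.
apply: t_obs_gt0 t0; first exact: continuous_affine_sqnorm.
  by move=> u; apply: dist2_const_heading.
by move=> s u x; apply: affine_sqnorm_le_between.
Qed.

Lemma polar_coordinates (x y : R) :
  exists theta, x = Num.sqrt (x ^+ 2 + y ^+ 2) * cos theta /\
                y = Num.sqrt (x ^+ 2 + y ^+ 2) * sin theta.
Proof.
set r := Num.sqrt _.
have r2 : r ^+ 2 = x ^+ 2 + y ^+ 2 by rewrite sqr_sqrtr // addr_ge0 ?sqr_ge0.
have [r0|rn0] := eqVneq r 0.
  have /eqP : x ^+ 2 + y ^+ 2 = 0 by rewrite -r2 r0 expr0n.
  rewrite paddr_eq0 ?sqr_ge0 // !sqrf_eq0 => /andP[/eqP-> /eqP->].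
  by exists 0; rewrite r0 !mul0r.
have r_pos : 0 < r by rewrite lt_def rn0 sqrtr_ge0.
have x_le_r : `|x| <= r.
  by rewrite -sqrtr_sqr ler_sqrt ?addr_ge0 ?sqr_ge0 // lerDl sqr_ge0.
have c_bound : -1 <= x / r <= 1.
  by rewrite -ler_norml normf_div (gtr0_norm r_pos) ler_pdivrMr // mul1r.
have unit : (x / r) ^+ 2 + (y / r) ^+ 2 = 1.
  by rewrite !expr_div_n -mulrDl -r2 divff // expf_neq0.
have sin_acos_r : r * sin (acos (x / r)) = `|y|.
  rewrite sin_acos // (_ : 1 - _ = (y / r) ^+ 2); last lra.
  by rewrite sqrtr_sqr normf_div (gtr0_norm r_pos) mulrCA divff // mulr1.
have r_cos : r * (x / r) = x by rewrite mulrCA divff // mulr1.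
have [y0|y0] := leP 0 y.
  by exists (acos (x / r)); rewrite acosK ?in_itv // sin_acos_r ger0_norm.
exists (- acos (x / r)).
by rewrite cosN sinN acosK ?in_itv // mulrN sin_acos_r ltr0_norm ?opprK.
Qed.

(* t is the larger root of (1 - alpha^2) t^2 - 2 b t + a^2 + b^2; the cone
   condition says exactly that its discriminant is nonnegative. *)
Lemma intercept_time (alpha a b : R) : 0 < alpha < 1 ->
  Num.sqrt (1 - alpha ^+ 2) * `|a| <= alpha * b ->
  exists2 t, 0 <= t & a ^+ 2 + (t - b) ^+ 2 = (alpha * t) ^+ 2.
Proof.
move=> /andP[a0 a1] cone; set s := 1 - alpha ^+ 2.
have s_pos : 0 < s by rewrite subr_gt0 expr_lt1 // ltW.
have b0 : 0 <= b.
  by rewrite -(pmulr_rge0 _ a0) (le_trans _ cone) // mulr_ge0 ?sqrtr_ge0.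
set D := (alpha * b) ^+ 2 - s * a ^+ 2.
have D0 : 0 <= D.
  have : (Num.sqrt s * `|a|) ^+ 2 <= (alpha * b) ^+ 2.
    by have := mulr_ge0 (sqrtr_ge0 s) (normr_ge0 a); nra.
  by rewrite /D subr_ge0 !exprMn sqr_sqrtr ?real_normK ?num_real // ltW.
set d := Num.sqrt D.
exists ((b + d) / s); first exact: divr_ge0 (addr_ge0 b0 (sqrtr_ge0 _)) (ltW s_pos).
apply/eqP; rewrite -subr_eq0.
have -> : a ^+ 2 + ((b + d) / s - b) ^+ 2 - (alpha * ((b + d) / s)) ^+ 2 =
    (d ^+ 2 - D) / s.
  by rewrite /D /s; field; rewrite -/s gt_eqF.
by rewrite sqr_sqrtr // subrr mul0r.
Qed.

Lemma const_heading_reaches (alpha xO yO yT a b : R) : 0 < alpha < 1 ->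
  Num.sqrt (1 - alpha ^+ 2) * `|a| <= alpha * b ->
  exists theta t, 0 <= t /\
    dist2 alpha xO yO yT (fun=> theta) t = (xO - a) ^+ 2 + (yO - yT - b) ^+ 2.
Proof.
move=> a01 cone; have /andP[a0 _] := a01.
have [t t0 ht] := intercept_time a01 cone.
have [theta [hc hs]] := polar_coordinates (- a) (t - b).
rewrite sqrrN ht sqrtr_sqr (ger0_norm (mulr_ge0 (ltW a0) t0)) in hc hs.
exists theta, t; split => //.
by rewrite dist2_const_heading // /affine_sqnorm; congr (_ ^+ 2 + _ ^+ 2); lra.
Qed.

Lemma decision_line_cone (alpha yT : R) (z : R * R) : 0 <= alpha ->
  decision_line alpha yT z -> Num.sqrt (1 - alpha ^+ 2) * `|z.1| = alpha * (z.2 - yT).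
Proof.
by move=> a0 [s [s0 [->|->]]] /=; rewrite ?normrN ger0_norm ?mulr_ge0 //; ring.
Qed.

Lemma decision_line_midpoint_cone (alpha yT : R) (p q : R * R) : 0 <= alpha ->
  decision_line alpha yT p -> decision_line alpha yT q ->
  Num.sqrt (1 - alpha ^+ 2) * `|(p.1 + q.1) / 2| <= alpha * ((p.2 + q.2) / 2 - yT).
Proof.
move=> a0 /(decision_line_cone a0) hp /(decision_line_cone a0) hq.
rewrite normf_div (ger0_norm (_ : 0 <= 2)) //.
have := ler_normD p.1 q.1; have := sqrtr_ge0 (1 - alpha ^+ 2); nra.
Qed.

Lemma midpoint_inside_circle (Rd xO yO : R) (p q : R * R) : p <> q ->
  obs_circle Rd xO yO p -> obs_circle Rd xO yO q ->
  (xO - (p.1 + q.1) / 2) ^+ 2 + (yO - (p.2 + q.2) / 2) ^+ 2 < Rd ^+ 2.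
Proof.
rewrite /obs_circle /= => pq Cp Cq.
have pq_pos : 0 < (p.1 - q.1) ^+ 2 + (p.2 - q.2) ^+ 2.
  rewrite lt_def addr_ge0 ?sqr_ge0 // andbT paddr_eq0 ?sqr_ge0 // !sqrf_eq0 !subr_eq0.
  by apply/negP => /andP[/eqP e1 /eqP e2]; apply: pq; apply: injective_projections.
have -> : (xO - (p.1 + q.1) / 2) ^+ 2 + (yO - (p.2 + q.2) / 2) ^+ 2 =
    ((p.1 - xO) ^+ 2 + (p.2 - yO) ^+ 2 + ((q.1 - xO) ^+ 2 + (q.2 - yO) ^+ 2)) / 2
    - ((p.1 - q.1) ^+ 2 + (p.2 - q.2) ^+ 2) / 4 by field.
rewrite Cp Cq; lra.
Qed.

End ObservationGame.

Theorem lemma9 (R : realType) (alpha Rd xO yO yT : R)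
  (ha0 : 0 < alpha) (ha1 : alpha < 1) (hR : 0 < Rd)
  (htwo : exists p q : R * R, p <> q /\
     obs_circle Rd xO yO `&` decision_line alpha yT = [set p] `|` [set q]) :
  (B2 alpha Rd xO yO yT \/ B3 alpha Rd xO yO yT) /\
  (t_obs_opt alpha Rd xO yO yT <> 0)%E.
Proof.
have a01 : 0 < alpha < 1 by rewrite ha0 ha1.
have [p [q [pq hpq]]] := htwo.
have [Cp DLp] : (obs_circle Rd xO yO `&` decision_line alpha yT) p by rewrite hpq; left.
have [Cq DLq] : (obs_circle Rd xO yO `&` decision_line alpha yT) q by rewrite hpq; right.
have := decision_line_midpoint_cone (ltW ha0) DLp DLq.
move=> /(const_heading_reaches xO yO yT a01) [theta [t [t0 dist_t]]].
have inside : dist2 alpha xO yO yT (fun=> theta) t < Rd ^+ 2.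
  rewrite dist_t; have := midpoint_inside_circle pq Cp Cq.
  by congr (_ + _ ^+ 2 < _); ring.
have obs_pos := t_obs_const_heading_gt0 t0 inside.
have ub : (t_obs_opt alpha Rd xO yO yT <= (2 * Rd / (1 - alpha))%:E)%E.
  by apply/ereal_supP => _ [psi mpsi <-]; apply: t_obs_le; rewrite ?ltW.
have lb : (0 < t_obs_opt alpha Rd xO yO yT)%E.
  apply: lt_le_trans obs_pos (ereal_sup_ubound _); exists (fun=> theta) => //.
  exact: measurable_cst.
split; last by move=> t_opt0; rewrite t_opt0 ltxx in lb.
by move: ub; rewrite le_eqVlt => /predU1P[|]; [right | left; rewrite /B2 lb].
Qed.
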